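(* Let $\{a,b\}$ be a $2$-element generating set of a finite abelian group $G$. For every integer $k$ with $0\le k<|G|$, there is a spanning quasi-path $P$ in $\mathrm{Cay}(G;a,b)$ such that $\delta_b(P)=k$.
   Context: The Cayley digraph $\mathrm{Cay}(G;a,b)$ has vertex set $G$ and an arc from $v$ to $v+s$ for all $v\in G$, $s\in\{a,b\}$; such an arc is an $s$-edge, and $\delta_b(P)$ denotes the number of $b$-edges in a subdigraph $P$. A spanning quasi-path in a digraph is a spanning subdigraph such that exactly one connected component is a directed path and all other components are directed cycles. *)

From mathcomp Require Import all_boot fingroup all_algebra.
Set Implicit Arguments. Unset Strict Implicit. Unset Printing Implicit Defensive.
Import GRing.Theory.
Local Open Scope ring_scope.

(* An arc is encoded as (v, s) : G * bool, with tail v; s = false is the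
   a-edge v -> v + a, s = true is the b-edge v -> v + b.
   A spanning subdigraph is given by its arc set P : {set G * bool}
   (its vertex set is all of G). *)
Section Cayley.
Variable G : finZmodType.
Variables a b : G.

Definition arc_tail (e : G * bool) : G := e.1.
Definition arc_head (e : G * bool) : G := e.1 + (if e.2 then b else a).

Definition uadj (P : {set G * bool}) : rel G :=
  fun x y => [exists e in P,
    ((arc_tail e == x) && (arc_head e == y)) ||
    ((arc_tail e == y) && (arc_head e == x))].

Definition components (P : {set G * bool}) : {set {set G}} :=
  [set [set y | connect (uadj P) x y] | x : G].

Definition is_dpath (P : {set G * bool}) (C : {set G}) : Prop :=
  exists (xs : seq G) (es : seq (G * bool)),
    [/\ uniq xs, C = [set x in xs], uniq es,
        [set e in P | arc_tail e \in C] = [set e in es] &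
        size es = (size xs).-1] /\
        forall i : nat, (i < size es)%N ->
          arc_tail (nth (0, false) es i) = nth 0 xs i /\
          arc_head (nth (0, false) es i) = nth 0 xs i.+1.

Definition is_dcycle (P : {set G * bool}) (C : {set G}) : Prop :=
  exists (xs : seq G) (es : seq (G * bool)),
    [/\ (0 < size xs)%N, uniq xs, C = [set x in xs], uniq es &
        [set e in P | arc_tail e \in C] = [set e in es]] /\
        size es = size xs /\
        forall i : nat, (i < size es)%N ->
          arc_tail (nth (0, false) es i) = nth 0 xs i /\
          arc_head (nth (0, false) es i) = nth 0 xs ((i.+1) %% size xs).

(* spanning quasi-path: exactly one component is a directed path, all other
   components are directed cycles (a component cannot be both, as a path on
   m vertices has m-1 arcs and a cycle has m arcs) *)
Definition spanning_quasi_path (P : {set G * bool}) : Prop :=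
  exists2 C0, C0 \in components P &
    is_dpath P C0 /\
    forall C, C \in components P -> C != C0 -> is_dcycle P C.

Definition delta_b (P : {set G * bool}) : nat := #|[set e in P | e.2]|.

End Cayley.

From mathcomp Require Import all_boot fingroup all_algebra.
Set Implicit Arguments. Unset Strict Implicit. Unset Printing Implicit Defensive.
Import GRing.Theory.

(* Choose a set S of k vertices and a vertex u outside S such that
   S + (b - a) is contained in S ∪ {u}.  Every vertex v other than u keeps its
   b-arc if v is in S and its a-arc otherwise.  No vertex receives two arcs,
   since v + b = w + a with v in S and w outside S forces w = v + (b - a).
   Closing the kept arcs into a permutation by one extra arc out of u, the
   components of the kept arcs are the cycles of that permutation, except the
   one through u, which is a path ending at u; exactly k arcs are b-arcs.
   The set S is grown one vertex at a time: put the current u into S and move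
   u to u + (b - a), or to any fresh vertex if u + (b - a) already lies in S. *)

Lemma exists_notin (T : finType) (A : {set T}) : #|A| < #|T| -> exists x, x \notin A.
Proof.
move=> ltAT; have /card_gt0P [x] : 0 < #|~: A|.
  by rewrite -(ltn_add2l #|A|) addn0 cardsC.
by rewrite inE; exists x.
Qed.

Lemma exists_injective_extension (T : finType) (u : T) (g : T -> T) :
  {in [set~ u] &, injective g} ->
  exists2 F : T -> T, injective F & forall v, v != u -> F v = g v.
Proof.
move=> g_inj; have [w w_new] : exists w, w \notin g @: [set~ u].
  apply: exists_notin; rewrite card_in_imset // cardsC1 ltn_predL.
  by apply/card_gt0P; exists u.
have g_im v : v != u -> g v \in g @: [set~ u] by move=> vu; rewrite imset_f ?in_setC1.
exists (fun v => if v == u then w else g v); last by move=> v /negPf ->.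
move=> x y; case: eqVneq => [->|xu]; case: eqVneq => [->|yu] //.
- by move=> wE; rewrite wE g_im in w_new.
- by move=> wE; rewrite -wE g_im in w_new.
- by apply: g_inj; rewrite in_setC1.
Qed.

Lemma nth_traject_default (T : Type) (f : T -> T) (x0 x : T) (n i : nat) :
  i < n -> nth x0 (traject f x n) i = iter i f x.
Proof. by move=> ltin; rewrite (set_nth_default x) ?size_traject ?nth_traject. Qed.

Lemma iter_mod_order (T : finType) (f : T -> T) (x : T) (n : nat) :
  injective f -> iter (n %% fingraph.order f x) f x = iter n f x.
Proof.
move=> f_inj; rewrite {2}(divn_eq n (fingraph.order f x)) addnC iterD; congr iter.
by elim: (n %/ fingraph.order f x) => // q IH; rewrite mulSn iterD -IH iter_order.
Qed.

Section ShiftClosedSet.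
Local Open Scope ring_scope.
Variable G : finZmodType.

Lemma exists_shift_closed_set (c : G) (k : nat) : (k < #|G|)%N ->
  exists S : {set G}, exists u : G,
    [/\ #|S| = k, u \notin S & {in S, forall x, (x + c \in S) || (x + c == u)}].
Proof.
elim: k => [|k IH] ltkG.
  by exists set0, 0; rewrite cards0 in_set0; split=> // x; rewrite in_set0.
have [S [u [cardS uS closedS]]] := IH (ltnW ltkG).
have card_uS : #|u |: S| = k.+1 by rewrite cardsU1 uS cardS.
have [v vS] : exists v, v \notin u |: S by apply: exists_notin; rewrite card_uS.
exists (u |: S), (if u + c \in u |: S then v else u + c); split=> //.
- by case: ifPn.
- move=> x; rewrite in_setU1 => /predU1P [->|/closedS].
    by case: ifP; rewrite ?eqxx ?orbT.
  by rewrite !in_setU1 => /orP [] ->; rewrite ?orbT.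
Qed.

Lemma shift_choice_injective (a b u : G) (S : {set G}) :
  {in S, forall x, (x + (b - a) \in S) || (x + (b - a) == u)} ->
  {in [set~ u] &, injective (fun v => arc_head a b (v, v \in S))}.
Proof.
rewrite /arc_head /= => closedS.
have mixed_heads_neq x y : x \in S -> y \notin S -> y != u -> x + b != y + a.
  move=> xS yS yu; apply/eqP => E; move: (closedS x xS).
  by rewrite addrA E addrK (negPf yS) (negPf yu).
move=> x y; rewrite !in_setC1 => xu yu.
case xS: (x \in S); case yS: (y \in S) => E; try exact: addIr E.
- by move/eqP: E; rewrite (negPf (mixed_heads_neq x y xS (negbT yS) yu)).
- by move/esym/eqP: E; rewrite (negPf (mixed_heads_neq y x yS (negbT xS) xu)).
Qed.

End ShiftClosedSet.

Definition selected_arcs (G : finZmodType) (s : G -> bool) (u : G) : {set G * bool} :=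
  [set e | (e.1 != u) && (e.2 == s e.1)].

Lemma delta_b_selected_arcs (G : finZmodType) (u : G) (S : {set G}) :
  u \notin S -> delta_b (selected_arcs (fun v => v \in S) u) = #|S|.
Proof.
move=> uS; have b_arc_inj : injective (fun v : G => (v, true)) by move=> x y [].
rewrite /delta_b -(card_imset S b_arc_inj); apply: eq_card => -[y c]; rewrite !inE /=.
apply/idP/imsetP => [/andP [/andP [_ /eqP ->] yS]|[z zS [-> ->]]].
  by exists y; rewrite -?yS.
by rewrite zS eqxx !andbT; apply: contraTneq zS => ->.
Qed.

Section SelectedArcs.
Variables (G : finZmodType) (a b : G) (s : G -> bool) (u : G) (F : G -> G).
Hypothesis F_inj : injective F.
Hypothesis F_arc : forall v, v != u -> F v = arc_head a b (v, s v).

Local Notation P := (selected_arcs s u).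
Local Notation R := (uadj a b P).

Definition selected_arc (v : G) : G * bool := (v, s v).

Lemma uadj_selectedE x y :
  R x y = ((x != u) && (F x == y)) || ((y != u) && (F y == x)).
Proof.
apply/existsP/orP => [[[z c]]|].
  rewrite inE /= => /andP [/andP [zu /eqP ->]].
  rewrite /arc_tail /= -F_arc //.
  by case/orP => /andP [/eqP <- ->]; [left | right]; rewrite zu.
case=> /andP [vu /eqP <-]; [exists (x, s x) | exists (y, s y)];
  by rewrite inE /= vu eqxx /arc_tail /= -F_arc // !eqxx ?orbT.
Qed.

Lemma uadj_selected_sym : symmetric R.
Proof. by move=> x y; rewrite !uadj_selectedE orbC. Qed.

Lemma connect_selected_to_u (n : nat) (x : G) : iter n F x = u -> connect R x u.
Proof.
elim: n x => [x <- |n IH x]; first exact: connect0.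
rewrite iterSr => /IH; case: (eqVneq x u) => [-> _|xu]; first exact: connect0.
by apply: connect_trans; apply: connect1; rewrite uadj_selectedE xu eqxx.
Qed.

Lemma connect_selectedE x y : connect R x y = fconnect F x y.
Proof.
apply/idP/idP; apply: connect_sub => {}x {}y.
  rewrite uadj_selectedE => /orP [] /andP [_ /eqP <-]; first exact: fconnect1.
  by rewrite fconnect_sym //; apply: fconnect1.
move=> /eqP <-; case: (eqVneq x u) => [->|xu]; last first.
  by apply: connect1; rewrite uadj_selectedE xu eqxx.
rewrite (sym_connect_sym uadj_selected_sym); apply: connect_selected_to_u.
by apply: iter_findex; rewrite fconnect_sym //; apply: fconnect1.
Qed.

Lemma component_selectedE x : [set y | connect R x y] = [set y in orbit F x].
Proof. by apply/setP => y; rewrite !inE connect_selectedE fconnect_orbit. Qed.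

Lemma selected_arcs_from (C : {set G}) (t : seq G) :
  (forall y, (y \in C) && (y != u) = (y \in t)) ->
  [set e in P | arc_tail e \in C] = [set e in map selected_arc t].
Proof.
move=> tE; apply/setP => -[y c]; rewrite !inE /arc_tail /=.
apply/idP/mapP => [/andP [/andP [yu /eqP ->] yC]|[z zt [-> ->]]].
  by exists y; rewrite -?tE ?yC.
by move: zt; rewrite -tE eqxx andbT => /andP [-> ->].
Qed.

Lemma selected_arcs_along_traject (x : G) (n i : nat) :
  (forall j, j < n -> iter j F x != u) -> i < n ->
  let e := nth (0%R : G, false) (map selected_arc (traject F x n)) i in
  arc_tail e = iter i F x /\ arc_head a b e = iter i.+1 F x.
Proof.
move=> avoid_u ltin; rewrite (nth_map 0%R) ?size_traject // nth_traject_default //.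
by rewrite /arc_tail -F_arc ?avoid_u // iterS.
Qed.

Lemma selected_arc_inj : injective selected_arc.
Proof. by move=> x y []. Qed.

Lemma is_dpath_selected_orbit : is_dpath a b P [set y in orbit F (F u)].
Proof.
set w := F u; set o := fingraph.order F w.
have o_gt0 : 0 < o := fingraph.order_gt0 F w.
have last_u : iter o.-1 F w = u by apply: F_inj; rewrite -iterS prednK // iter_order.
set t := traject F w o.-1.
have orbitE : orbit F w = rcons t u.
  by rewrite /orbit -/o -{1}(prednK o_gt0) trajectSr last_u.
have /andP [u_t t_uniq] : (u \notin t) && uniq t.
  by rewrite -rcons_uniq -orbitE orbit_uniq.
have avoid_u j : j < o.-1 -> iter j F w != u.
  by move=> ltj; apply: contraNneq u_t => <-; apply/trajectP; exists j.
exists (orbit F w), (map selected_arc t); split; first split.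
- exact: orbit_uniq.
- by [].
- by rewrite map_inj_uniq //; apply: selected_arc_inj.
- apply: selected_arcs_from => y; rewrite inE orbitE mem_rcons in_cons.
  by case: eqVneq => [->|]; rewrite ?(negPf u_t) ?andbF ?andbT.
- by rewrite size_map size_orbit size_traject.
- move=> i; rewrite size_map size_traject => lti.
  have lti1 : i.+1 < o by rewrite -(prednK o_gt0) ltnS.
  rewrite /orbit -/o !nth_traject_default ?(ltnW lti1) //.
  exact: selected_arcs_along_traject.
Qed.

Lemma is_dcycle_selected_orbit x :
  u \notin orbit F x -> is_dcycle a b P [set y in orbit F x].
Proof.
move=> u_orbit; set o := fingraph.order F x.
have avoid_u j : iter j F x != u.
  by apply: contraNneq u_orbit => <-; rewrite -fconnect_orbit fconnect_iter.
exists (orbit F x), (map selected_arc (orbit F x)); split; first split.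
- by rewrite size_orbit fingraph.order_gt0.
- exact: orbit_uniq.
- by [].
- by rewrite map_inj_uniq ?orbit_uniq //; apply: selected_arc_inj.
- apply: selected_arcs_from => y; rewrite inE.
  by case: eqVneq => [->|]; rewrite ?(negPf u_orbit) ?andbF ?andbT.
- split; first by rewrite size_map.
  move=> i; rewrite size_map size_orbit => lti.
  rewrite /orbit -/o !nth_traject_default ?ltn_pmod ?fingraph.order_gt0 //.
  rewrite iter_mod_order //.
  exact: selected_arcs_along_traject.
Qed.

Theorem spanning_quasi_path_selected : spanning_quasi_path a b P.
Proof.
exists [set y | connect R (F u) y]; first by apply/imsetP; exists (F u).
split; first by rewrite component_selectedE; apply: is_dpath_selected_orbit.
move=> _ /imsetP [x _ ->] neq_path; rewrite component_selectedE.
apply: is_dcycle_selected_orbit; apply: contra neq_path => u_orbit.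
apply/eqP/setP => y; rewrite !inE.
apply: (same_connect (sym_connect_sym uadj_selected_sym)).
rewrite connect_selectedE; apply: connect_trans (fconnect1 F u).
by rewrite fconnect_orbit.
Qed.

End SelectedArcs.

Theorem mainTheorem19 (G : finZmodType) (a b : G) :
  a != b ->
  (<<[set a; b]>>)%g = [set: G] ->
  forall k : nat, k < #|G| ->
  exists P : {set G * bool},
    spanning_quasi_path a b P /\ delta_b P = k.
Proof.
move=> _ _ k ltkG.
have [S [u [cardS uS closedS]]] := exists_shift_closed_set (b - a)%R ltkG.
have [F F_inj F_arc] := exists_injective_extension (shift_choice_injective closedS).
exists (selected_arcs (fun v => v \in S) u); split.
- exact: spanning_quasi_path_selected F_inj F_arc.
- by rewrite delta_b_selected_arcs.
Qed.
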